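(* Consider the TGSS iteration with data $y^\delta$, $\|y^\delta-y\|\le\delta$, $\delta\ge0$. Let $\tau>\frac{1+\eta}{1-\eta}$, $\mu>1$, $\Psi:=(1-\eta)-\tau^{-1}(1+\eta)$, and let $k_*=k_*(\delta,y^\delta):=\min\{k\in\mathbb N_0:\|r_k^\delta\|\le\tau\delta\}$ (with $k_*=\infty$ if no such $k$ exists). Assume the coupling condition $$\lambda_k^\delta(\lambda_k^\delta+1)\|x_k^\delta-x_{k-1}^\delta\|^2\le\frac{\Psi^2\|r_k^\delta\|^2}{\mu c_F^2}$$ holds for all $0\le k<k_*$. Then the iterates $x_k^\delta$ are well defined for all $k\le k_*$ (with all $z_k^\delta\in B_{4\rho}(x_0)$ for $k<k_*$), $$\|x_{k+1}^\delta-x_*\|\le\|x_k^\delta-x_*\|\quad\text{for all }-1\le k<k_*,$$ $x_k^\delta\in B_\rho(x_* )\subset B_{2\rho}(x_0)$ for all $-1\le k\le k_*$, and $$\sum_{k=0}^{k_*-1}\|F(z_k^\delta)-y^\delta\|^2\le\frac{c_F^2}{\bar\mu\Psi^2}\|x_0-x_*\|^2,\qquad \bar\mu:=\frac{\mu-1}{\mu}.$$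
   Context: Setting: $\mathcal X,\mathcal Y$ are real Hilbert spaces, $F:\mathcal D(F)\subset\mathcal X\to\mathcal Y$ is continuously Fréchet differentiable with derivative $F'(x)\in\mathcal L(\mathcal X,\mathcal Y)$ and Hilbert-space adjoint $F'(x)^*$; $x_0\in\mathcal X$ and $\rho>0$ satisfy $B_{4\rho}(x_0)\subset\mathcal D(F)$, where $B_r(x)$ is the closed ball of radius $r$ about $x$. Standing assumptions: (A1) $F(x)=y$ has a solution $x_*\in B_\rho(x_0)$; (A2) there is $\eta\in(0,1)$ with $\|F(x)-F(\tilde x)-F'(x)(x-\tilde x)\|\le\eta\|F(x)-F(\tilde x)\|$ for all $x,\tilde x\in B_{4\rho}(x_0)$; (A3) $0<\|F'(x)\|\le c_F$ for all $x\in B_{4\rho}(x_0)$. Data: $y^\delta\in\mathcal Y$ with $\|y^\delta-y\|\le\delta$, $\delta\ge0$ ($\delta=0$ means $y^\delta=y$). Notation: for $u\in\mathcal X$, $a\in\mathbb R$, $\xi\ge0$: $H(u,a)=\{x:\langle u,x\rangle=a\}$, $H_>(u,a)=\{x:\langle u,x\rangle>a\}$, $H(u,a,\xi)=\{x:|\langle u,x\rangle-a|\le\xi\}$. $P_C$ is the metric projection onto a nonempty closed convex set $C$. TGSS iteration (for data $y^\delta$, iterates carry superscript $\delta$): fix an integer $K\ge1$; set $x_{-1}^\delta=x_0^\delta=x_0$. For $k=0,1,2,\dots$: choose $\lambda_k^\delta\in[0,1]$ with $\lambda_0^\delta=0$, put $z_k^\delta=x_k^\delta+\lambda_k^\delta(x_k^\delta-x_{k-1}^\delta)$,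 $r_k^\delta=F(z_k^\delta)-y^\delta$, $u_k^\delta=F'(z_k^\delta)^*r_k^\delta$, $\alpha_k^\delta=\langle u_k^\delta,z_k^\delta\rangle-\|r_k^\delta\|^2$, $\xi_k^\delta=(\delta+\eta(\|r_k^\delta\|+\delta))\|r_k^\delta\|$, $H_k^\delta=H(u_k^\delta,\alpha_k^\delta,\xi_k^\delta)$. Choose a finite index set $I_k\subset\{k-K,\dots,k\}\cap\mathbb N_0$ with $k\in I_k$, written $I_k=\{k_1>\dots>k_s\}$, $k_1=k$; set $p_1=P_{H^\delta_{k_1}}(z_k^\delta)$, $p_j=P_{H^\delta_{k_1}\cap\dots\cap H^\delta_{k_j}}(p_{j-1})$ for $j=2,\dots,s$, and $x_{k+1}^\delta=p_s$. The iteration is run while $k<k_*$. For $\delta=0$ the superscript is dropped. *)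

From Stdlib Require Import Reals Lra Lia List Sorted.
Open Scope R_scope.
Set Implicit Arguments.

Record HSpace := {
  carrier :> Type;
  hzero : carrier;
  hadd : carrier -> carrier -> carrier;
  hopp : carrier -> carrier;
  hscal : R -> carrier -> carrier;
  inner : carrier -> carrier -> R;
  hadd_assoc : forall u v w, hadd u (hadd v w) = hadd (hadd u v) w;
  hadd_comm : forall u v, hadd u v = hadd v u;
  hadd_zero : forall u, hadd u hzero = u;
  hadd_opp : forall u, hadd u (hopp u) = hzero;
  hscal_one : forall u, hscal 1 u = u;
  hscal_assoc : forall a b u, hscal a (hscal b u) = hscal (a * b) u;
  hscal_distr_r : forall a b u, hscal (a + b) u = hadd (hscal a u) (hscal b u);
  hscal_distr_l : forall a u v, hscal a (hadd u v) = hadd (hscal a u) (hscal a v);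
  inner_sym : forall u v, inner u v = inner v u;
  inner_add_l : forall u v w, inner (hadd u v) w = inner u w + inner v w;
  inner_scal_l : forall a u v, inner (hscal a u) v = a * inner u v;
  inner_pos : forall u, 0 <= inner u u;
  inner_def : forall u, inner u u = 0 -> u = hzero;
  hcomplete : forall s : nat -> carrier,
    (forall eps, 0 < eps -> exists N, forall m n, (N <= m)%nat -> (N <= n)%nat ->
        sqrt (inner (hadd (s m) (hopp (s n))) (hadd (s m) (hopp (s n)))) < eps) ->
    exists l, forall eps, 0 < eps -> exists N, forall n, (N <= n)%nat ->
        sqrt (inner (hadd (s n) (hopp l)) (hadd (s n) (hopp l))) < eps
}.

Arguments hzero {h}.
Arguments hadd {h}.
Arguments hopp {h}.
Arguments hscal {h}.
Arguments inner {h}.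

Definition hsub {X : HSpace} (u v : X) : X := hadd u (hopp v).
Definition hnorm {X : HSpace} (u : X) : R := sqrt (inner u u).

Definition ball {X : HSpace} (c : X) (r : R) : X -> Prop :=
  fun v => hnorm (hsub v c) <= r.

Definition stripe {X : HSpace} (u : X) (a xi : R) : X -> Prop :=
  fun v => Rabs (inner u v - a) <= xi.

Definition is_proj {X : HSpace} (C : X -> Prop) (p q : X) : Prop :=
  C q /\ forall c, C c -> hnorm (hsub p q) <= hnorm (hsub p c).

(* successive projections: for L = [k1;...;ks], p_1 = P_{C cap H k1}(p),
   p_j = P_{C cap H k1 cap ... cap H kj}(p_{j-1}); result is p_s *)
Fixpoint chain_rel {X : HSpace} (H : nat -> X -> Prop) (C : X -> Prop)
    (L : list nat) (p q : X) : Prop :=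
  match L with
  | nil => q = p
  | i :: L' => exists p', is_proj (fun v => C v /\ H i v) p p' /\
                 chain_rel H (fun v => C v /\ H i v) L' p' q
  end.

Fixpoint sum_lt (f : nat -> R) (n : nat) : R :=
  match n with O => 0 | S m => sum_lt f m + f m end.

Definition opnorm_le {X Y : HSpace} (A : X -> Y) (c : R) : Prop :=
  forall h, hnorm (A h) <= c * hnorm h.

Definition is_linear {X Y : HSpace} (A : X -> Y) : Prop :=
  (forall u v, A (hadd u v) = hadd (A u) (A v)) /\
  (forall a u, A (hscal a u) = hscal a (A u)).

(* ---------- TGSS quantities ----------
   x : nat -> X with x k = x_k^delta (k >= 0); x_{-1} = x_0 is x (pred 0). *)
Section TGSS.
Variables (X Y : HSpace) (F : X -> Y) (Fadj : X -> Y -> X)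
          (yd : Y) (eta delta : R) (x : nat -> X) (lam : nat -> R).

Definition zk (k : nat) : X := hadd (x k) (hscal (lam k) (hsub (x k) (x (pred k)))).
Definition rk (k : nat) : Y := hsub (F (zk k)) yd.
Definition uk (k : nat) : X := Fadj (zk k) (rk k).
Definition alphak (k : nat) : R := inner (uk k) (zk k) - (hnorm (rk k))^2.
Definition xik (k : nat) : R := (delta + eta * (hnorm (rk k) + delta)) * hnorm (rk k).
Definition Hk (k : nat) : X -> Prop := stripe (uk k) (alphak k) (xik k).

(* k < k_*  where k_* = min {k : ||r_k|| <= tau delta} (possibly infinite) *)
Definition lt_kstar (tau : R) (k : nat) : Prop :=
  forall j, (j <= k)%nat -> tau * delta < hnorm (rk j).
Definition le_kstar (tau : R) (k : nat) : Prop :=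
  forall j, (j < k)%nat -> tau * delta < hnorm (rk j).
End TGSS.

Arguments zk {X}.
Arguments rk {X Y}.
Arguments uk {X Y}.
Arguments alphak {X Y}.
Arguments xik {X Y}.
Arguments Hk {X Y}.
Arguments lt_kstar {X Y}.
Arguments le_kstar {X Y}.

Definition admissible_I (K k : nat) (L : list nat) : Prop :=
  (exists L', L = k :: L') /\ Sorted gt L /\ Forall (fun j => (k <= j + K)%nat) L.

From Stdlib Require Import Reals Lra Lia List Sorted ClassicalEpsilon Classical.
Open Scope R_scope.

(* The exact solution [xstar] lies in every stripe [H_k]: this is the tangential cone
   condition (A2) combined with the noise bound. Hence each successive projection onto
   intersections of stripes is a Fejer step, [|p - xstar|^2 <= |z - xstar|^2 - |z - p|^2],
   and by (A3) the first one moves [z_k] by at least [Psi |r_k| / cF] as long as the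
   discrepancy principle has not stopped the iteration. If the errors [|x_k - xstar|] were
   nonincreasing so far, the inertial point satisfies
   [|z_k - xstar|^2 <= |x_k - xstar|^2 + lam (lam + 1) |x_k - x_{k-1}|^2], and the coupling
   condition bounds the extra term by [1/mu] of the gain. So
   [|x_{k+1} - xstar|^2 <= |x_k - xstar|^2 - ((mu - 1)/mu) (Psi/cF)^2 |r_k|^2], which by
   induction keeps all iterates in [B_rho(xstar)] (so every [z_k] in [B_{4 rho}(x0)], where
   (A2) and (A3) apply) and telescopes to the bound on the residuals. *)

Section InnerProduct.
Context {E : HSpace}.
Implicit Types u v w : E.

Lemma inner_add_r u v w : inner w (hadd u v) = inner w u + inner w v.
Proof. rewrite inner_sym, inner_add_l, (inner_sym _ u), (inner_sym _ v); ring. Qed.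

Lemma inner_scal_r a u v : inner v (hscal a u) = a * inner v u.
Proof. rewrite inner_sym, inner_scal_l, inner_sym; ring. Qed.

Lemma inner_zero_l v : inner (@hzero E) v = 0.
Proof. pose proof (inner_add_l E hzero hzero v) as Hadd; rewrite hadd_zero in Hadd; lra. Qed.

Lemma inner_zero_r v : inner v (@hzero E) = 0.
Proof. rewrite inner_sym; apply inner_zero_l. Qed.

Lemma inner_opp_l u v : inner (hopp u) v = - inner u v.
Proof.
  pose proof (inner_add_l E u (hopp u) v) as Hadd.
  rewrite hadd_opp, inner_zero_l in Hadd; lra.
Qed.

Lemma inner_opp_r u v : inner v (hopp u) = - inner v u.
Proof. rewrite inner_sym, inner_opp_l, inner_sym; ring. Qed.

Lemma inner_sub_l u v w : inner (hsub u v) w = inner u w - inner v w.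
Proof. unfold hsub; rewrite inner_add_l, inner_opp_l; ring. Qed.

Lemma inner_sub_r u v w : inner w (hsub u v) = inner w u - inner w v.
Proof. unfold hsub; rewrite inner_add_r, inner_opp_r; ring. Qed.

Lemma hnorm_ge0 u : 0 <= hnorm u.
Proof. apply sqrt_pos. Qed.

Lemma hnorm_sq u : hnorm u ^ 2 = inner u u.
Proof. unfold hnorm; rewrite <- Rsqr_pow2; apply Rsqr_sqrt, inner_pos. Qed.

Lemma hnorm_congr u v : inner u u = inner v v -> hnorm u = hnorm v.
Proof. now unfold hnorm; intros ->. Qed.

Lemma hnorm_le_iff_sq u b : 0 <= b -> hnorm u <= b <-> hnorm u ^ 2 <= b ^ 2.
Proof. pose proof (hnorm_ge0 u); split; intros; nra. Qed.

Lemma inner_sq_le_mul u v : inner u v ^ 2 <= inner u u * inner v v.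
Proof.
  destruct (Req_dec (inner v v) 0) as [Hv|Hv].
  - apply inner_def in Hv; subst v; rewrite !inner_zero_r; lra.
  - pose proof (inner_pos _ v).
    (* expand [0 <= |u + t v|^2] at the minimising [t = - <u,v> / |v|^2] *)
    set (t := - inner u v / inner v v).
    pose proof (inner_pos _ (hadd u (hscal t v))) as P.
    rewrite !inner_add_l, !inner_add_r, !inner_scal_l, !inner_scal_r, (inner_sym _ v u) in P.
    assert (Ht : t * inner v v = - inner u v) by (unfold t; field; lra).
    nra.
Qed.

Lemma Rabs_inner_le u v : Rabs (inner u v) <= hnorm u * hnorm v.
Proof.
  unfold hnorm; rewrite <- sqrt_mult by apply inner_pos.
  rewrite <- sqrt_Rsqr_abs; apply sqrt_le_1_alt; rewrite Rsqr_pow2; apply inner_sq_le_mul.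
Qed.

Lemma inner_le_mul_hnorm u v : inner u v <= hnorm u * hnorm v.
Proof. eapply Rle_trans; [apply Rle_abs | apply Rabs_inner_le]. Qed.

Lemma hnorm_add_le u v : hnorm (hadd u v) <= hnorm u + hnorm v.
Proof.
  pose proof (hnorm_ge0 u); pose proof (hnorm_ge0 v).
  apply hnorm_le_iff_sq; [lra|].
  rewrite hnorm_sq, !inner_add_l, !inner_add_r, (inner_sym _ v u).
  pose proof (inner_le_mul_hnorm u v); rewrite <- (hnorm_sq u), <- (hnorm_sq v); nra.
Qed.

Lemma hnorm_scal a u : hnorm (hscal a u) = Rabs a * hnorm u.
Proof.
  unfold hnorm; rewrite inner_scal_l, inner_scal_r, <- Rmult_assoc.
  rewrite sqrt_mult by (try apply inner_pos; nra).
  now rewrite <- sqrt_Rsqr_abs.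
Qed.
End InnerProduct.

Global Hint Rewrite @inner_add_l @inner_add_r @inner_scal_l @inner_scal_r
  @inner_zero_l @inner_zero_r @inner_opp_l @inner_opp_r @inner_sub_l @inner_sub_r
  : inner.

(* Orienting every [inner b a] like an occurrence of [inner a b] lets [ring] identify them. *)
Ltac inner_expand :=
  autorewrite with inner;
  repeat match goal with
  | |- context [@inner ?h ?a ?b] =>
      match goal with |- context [@inner h b a] =>
        tryif constr_eq a b then fail else rewrite (inner_sym h b a) end end.

Section Distances.
Context {E : HSpace}.
Implicit Types a b c : E.

Lemma hnorm_sub_sym a b : hnorm (hsub a b) = hnorm (hsub b a).
Proof. apply hnorm_congr; inner_expand; ring. Qed.

Lemma hnorm_sub_le a b c : hnorm (hsub a c) <= hnorm (hsub a b) + hnorm (hsub b c).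
Proof.
  rewrite (hnorm_congr (hsub a c) (hadd (hsub a b) (hsub b c))) by (inner_expand; ring).
  apply hnorm_add_le.
Qed.

Lemma ball_center c r : 0 <= r -> ball c r c.
Proof.
  intros Hr; unfold ball, hnorm.
  replace (inner (hsub c c) (hsub c c)) with 0 by (inner_expand; ring).
  now rewrite sqrt_0.
Qed.

Lemma ball_subset c c' r r' v :
  hnorm (hsub c c') + r <= r' -> ball c r v -> ball c' r' v.
Proof. unfold ball; intros Hr Hv; pose proof (hnorm_sub_le v c c'); lra. Qed.
End Distances.

Definition is_convex {E : HSpace} (C : E -> Prop) :=
  forall a b t, C a -> C b -> 0 <= t <= 1 -> C (hadd a (hscal t (hsub b a))).

Definition is_closed {E : HSpace} (C : E -> Prop) :=
  forall (s : nat -> E) l, (forall n, C (s n)) ->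
    (forall eps, 0 < eps -> exists N, forall n, (N <= n)%nat -> hnorm (hsub (s n) l) < eps) ->
    C l.

Section Projection.
Context {E : HSpace}.
Implicit Types (C : E -> Prop) (p q c : E).

Lemma is_proj_variational C p q c :
  is_convex C -> is_proj C p q -> C c -> inner (hsub p q) (hsub c q) <= 0.
Proof.
  intros Hcv [Hq Hmin] Hc.
  set (B := inner (hsub p q) (hsub c q)); set (A := inner (hsub c q) (hsub c q)).
  assert (Hseg : forall t, 0 < t <= 1 -> 2 * t * B <= t ^ 2 * A).
  { intros t Ht.
    assert (Hct : C (hadd q (hscal t (hsub c q)))) by (apply Hcv; auto; lra).
    apply Hmin in Hct; apply (hnorm_le_iff_sq _ _ (hnorm_ge0 _)) in Hct.
    rewrite !hnorm_sq in Hct.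
    assert (Hexp : inner (hsub p (hadd q (hscal t (hsub c q))))
                         (hsub p (hadd q (hscal t (hsub c q))))
                   = inner (hsub p q) (hsub p q) - 2 * t * B + t ^ 2 * A)
      by (unfold A, B; inner_expand; ring).
    lra. }
  pose proof (inner_pos _ (hsub c q)) as HA; fold A in HA.
  apply Rnot_lt_le; intros HB.
  (* the quadratic [t^2 A - 2 t B] is negative at [t = B / (A + B)] *)
  set (t := B / (A + B)).
  assert (Ht : t * (A + B) = B) by (unfold t; field; lra).
  assert (Ht01 : 0 < t <= 1).
  { split; [apply Rdiv_lt_0_compat; lra|].
    apply Rmult_le_reg_r with (A + B); [lra|]; rewrite Ht; lra. }
  specialize (Hseg t Ht01); nra.
Qed.

Lemma is_proj_dist_sq C p q c : is_convex C -> is_proj C p q -> C c ->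
  hnorm (hsub p q) ^ 2 + hnorm (hsub q c) ^ 2 <= hnorm (hsub p c) ^ 2.
Proof.
  intros Hcv Hp Hc; pose proof (is_proj_variational C p q c Hcv Hp Hc).
  assert (Hexp : inner (hsub p c) (hsub p c) = inner (hsub p q) (hsub p q)
      + inner (hsub q c) (hsub q c) - 2 * inner (hsub p q) (hsub c q))
    by (inner_expand; ring).
  rewrite !hnorm_sq; lra.
Qed.
End Projection.

Lemma approx_inf {T : Type} (A : T -> Prop) (f : T -> R) :
  (exists a, A a) -> (forall a, A a -> 0 <= f a) ->
  exists m, (forall a, A a -> m <= f a) /\
            forall eps, 0 < eps -> exists a, A a /\ f a < m + eps.
Proof.
  intros [a0 Ha0] Hf.
  destruct (completeness (fun r => exists a, A a /\ r = - f a)) as [M [Hub Hlub]].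
  - exists 0; intros r [a [Ha ->]]; specialize (Hf a Ha); lra.
  - exists (- f a0), a0; auto.
  - exists (- M); split.
    + intros a Ha; enough (- f a <= M) by lra; apply Hub; eauto.
    + intros eps Heps; apply NNPP; intros Hno.
      enough (M <= M - eps) by lra.
      apply Hlub; intros r [a [Ha ->]].
      destruct (Rlt_le_dec (f a) (- M + eps)); [exfalso; eauto | lra].
Qed.

Lemma Rinv_INR_S_le N n : (0 < N)%nat -> (N <= n)%nat -> / INR (S n) <= / INR N.
Proof. intros; apply Rinv_le_contravar; [apply lt_0_INR | apply le_INR]; lia. Qed.

Section ProjectionExists.
Context {E : HSpace}.
Variables (C : E -> Prop) (p : E) (d : R).
Hypothesis Hcv : is_convex C.
Hypothesis Hd : forall c, C c -> d <= hnorm (hsub p c) ^ 2.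

(* parallelogram law at the midpoint of [a] and [b], which lies in [C] *)
Lemma hnorm_sub_sq_le_of_inf a b : C a -> C b ->
  hnorm (hsub a b) ^ 2
    <= 2 * (hnorm (hsub p a) ^ 2 - d) + 2 * (hnorm (hsub p b) ^ 2 - d).
Proof.
  intros Ha Hb.
  assert (Hm : C (hadd a (hscal (/ 2) (hsub b a)))) by (apply Hcv; auto; lra).
  apply Hd in Hm; rewrite !hnorm_sq in *.
  assert (Hpar : inner (hsub a b) (hsub a b)
      = 2 * inner (hsub p a) (hsub p a) + 2 * inner (hsub p b) (hsub p b)
        - 4 * inner (hsub p (hadd a (hscal (/ 2) (hsub b a))))
                    (hsub p (hadd a (hscal (/ 2) (hsub b a)))))
    by (inner_expand; field).
  lra.
Qed.

Lemma dist_sq_limit_le (s : nat -> E) l :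
  (forall n, hnorm (hsub p (s n)) ^ 2 <= d + / INR (S n)) ->
  (forall eps, 0 < eps -> exists N, forall n, (N <= n)%nat -> hnorm (hsub (s n) l) < eps) ->
  hnorm (hsub p l) ^ 2 <= d.
Proof.
  intros Hs Hl; apply Rle_plus_epsilon; intros eps Heps.
  pose proof (hnorm_ge0 (hsub p l)) as Ht.
  remember (hnorm (hsub p l)) as t eqn:Et.
  set (g := Rmin 1 (eps / (2 * (2 * t + 3)))).
  assert (Hg : 0 < g) by (apply Rmin_glb_lt; [lra | apply Rdiv_lt_0_compat; lra]).
  assert (Hg1 : g <= 1) by apply Rmin_l.
  assert (Hg2 : g * (2 * t + 3) <= eps / 2).
  { assert (Hgr : g <= eps / (2 * (2 * t + 3))) by apply Rmin_r.
    apply Rmult_le_compat_r with (r := 2 * t + 3) in Hgr; [|lra].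
    replace (eps / (2 * (2 * t + 3)) * (2 * t + 3)) with (eps / 2) in Hgr by (field; lra).
    exact Hgr. }
  destruct (Hl g Hg) as [N1 HN1].
  destruct (archimed_cor1 (eps / 2)) as [N2 [HN2 HN2']]; [lra|].
  set (n := Nat.max N1 N2).
  specialize (HN1 n ltac:(unfold n; lia)); specialize (Hs n).
  pose proof (Rinv_INR_S_le N2 n HN2' ltac:(unfold n; lia)).
  pose proof (hnorm_sub_le p (s n) l); pose proof (hnorm_sub_le p l (s n)).
  rewrite (hnorm_sub_sym l (s n)), <- Et in *.
  pose proof (hnorm_ge0 (hsub (s n) l)); pose proof (hnorm_ge0 (hsub p (s n))).
  set (e := hnorm (hsub (s n) l)) in *; set (a := hnorm (hsub p (s n))) in *.
  assert (t ^ 2 <= (a + e) ^ 2) by (apply pow_incr; lra).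
  assert (e * (2 * a + e) <= e * (2 * t + 3)) by nra.
  assert (e * (2 * t + 3) <= g * (2 * t + 3)) by nra.
  lra.
Qed.
End ProjectionExists.

Lemma is_proj_exists {E : HSpace} (C : E -> Prop) p :
  is_convex C -> is_closed C -> (exists c, C c) -> exists q, is_proj C p q.
Proof.
  intros Hcv Hcl HC.
  destruct (approx_inf C (fun c => hnorm (hsub p c) ^ 2) HC) as [d [Hd Happr]];
    [intros c _; apply pow2_ge_0|].
  destruct (choice (fun n c => C c /\ hnorm (hsub p c) ^ 2 < d + / INR (S n)))
    as [s Hs].
  { intros n; apply Happr, Rinv_0_lt_compat, lt_0_INR; lia. }
  destruct (hcomplete E s) as [l Hl].
  { intros eps Heps.
    destruct (archimed_cor1 (eps ^ 2 / 4)) as [N [HN HN0]]; [nra|].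
    exists N; intros m n Hm Hn.
    pose proof (hnorm_sub_sq_le_of_inf C p d Hcv Hd (s m) (s n)
                  (proj1 (Hs m)) (proj1 (Hs n))).
    pose proof (Rinv_INR_S_le N m HN0 Hm); pose proof (Rinv_INR_S_le N n HN0 Hn).
    pose proof (proj2 (Hs m)); pose proof (proj2 (Hs n)).
    change (hnorm (hsub (s m) (s n)) < eps).
    pose proof (hnorm_ge0 (hsub (s m) (s n))); nra. }
  exists l; split.
  - apply (Hcl s l); [intros n; apply Hs | exact Hl].
  - intros c Hc.
    assert (hnorm (hsub p l) ^ 2 <= d).
    { apply (dist_sq_limit_le p d s l); [intros n; left; apply Hs | exact Hl]. }
    specialize (Hd c Hc).
    pose proof (hnorm_ge0 (hsub p l)); pose proof (hnorm_ge0 (hsub p c)); nra.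
Qed.

Section Stripes.
Context {E : HSpace}.

Lemma stripe_convex (u : E) a xi : is_convex (stripe u a xi).
Proof.
  intros b c t Hb Hc Ht; unfold stripe in *; inner_expand.
  replace (inner u b + t * (inner u c - inner u b) - a)
    with ((1 - t) * (inner u b - a) + t * (inner u c - a)) by ring.
  revert Hb Hc; generalize (inner u b - a) (inner u c - a); intros y z Hy Hz.
  unfold Rabs in *; repeat destruct Rcase_abs; nra.
Qed.

Lemma stripe_closed (u : E) a xi : is_closed (stripe u a xi).
Proof.
  intros s l Hs Hl; unfold stripe in *.
  apply Rnot_lt_le; intros Hlt.
  pose proof (hnorm_ge0 u) as Hu.
  set (g := Rabs (inner u l - a) - xi).
  destruct (Hl (g / (hnorm u + 1))) as [N HN]; [apply Rdiv_lt_0_compat; unfold g; lra|].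
  specialize (HN N (le_n _)); specialize (Hs N).
  pose proof (Rabs_inner_le u (hsub (s N) l)) as HCS; rewrite inner_sub_r in HCS.
  assert (Hclose : hnorm u * hnorm (hsub (s N) l) < g).
  { pose proof (hnorm_ge0 (hsub (s N) l)).
    assert (hnorm u * hnorm (hsub (s N) l) <= hnorm u * (g / (hnorm u + 1)))
      by (apply Rmult_le_compat_l; lra).
    assert (hnorm u * (g / (hnorm u + 1)) < g).
    { apply Rmult_lt_reg_r with (hnorm u + 1); [lra|].
      replace (hnorm u * (g / (hnorm u + 1)) * (hnorm u + 1)) with (hnorm u * g)
        by (field; lra).
      unfold g; nra. }
    lra. }
  unfold g in *; revert Hs HCS Hclose; generalize (inner u (s N)) (inner u l); intros A B.
  unfold Rabs; repeat destruct Rcase_abs; intros; lra.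
Qed.

Lemma and_convex (C D : E -> Prop) :
  is_convex C -> is_convex D -> is_convex (fun v => C v /\ D v).
Proof. intros HC HD a b t [] [] Ht; split; auto. Qed.

Lemma and_closed (C D : E -> Prop) :
  is_closed C -> is_closed D -> is_closed (fun v => C v /\ D v).
Proof.
  intros HC HD s l Hs Hl; split; [apply (HC s l) | apply (HD s l)]; auto; apply Hs.
Qed.

Lemma full_convex : is_convex (fun _ : E => True).
Proof. now intros. Qed.

Lemma full_closed : is_closed (fun _ : E => True).
Proof. now intros. Qed.
End Stripes.

Section Chains.
Context {E : HSpace}.
Variables (H : nat -> E -> Prop) (xs : E).

Lemma chain_rel_exists L (C : E -> Prop) p :
  is_convex C -> is_closed C -> C xs ->
  (forall i, In i L -> is_convex (H i) /\ is_closed (H i) /\ H i xs) ->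
  exists q, chain_rel H C L p q.
Proof.
  revert C p; induction L as [|i L IH]; intros C p Hcv Hcl Hx HL.
  - now exists p.
  - destruct (HL i (or_introl eq_refl)) as [Hcvi [Hcli Hxi]].
    assert (Hcv' : is_convex (fun v => C v /\ H i v)) by now apply and_convex.
    assert (Hcl' : is_closed (fun v => C v /\ H i v)) by now apply and_closed.
    destruct (is_proj_exists _ p Hcv' Hcl') as [p' Hp']; [now exists xs|].
    destruct (IH _ p' Hcv' Hcl') as [q Hq]; [auto | intros j Hj; apply HL; now right|].
    exists q, p'; auto.
Qed.

Lemma chain_rel_dist_le L (C : E -> Prop) p q :
  is_convex C -> C xs -> (forall i, In i L -> is_convex (H i) /\ H i xs) ->
  chain_rel H C L p q -> hnorm (hsub q xs) <= hnorm (hsub p xs).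
Proof.
  revert C p; induction L as [|i L IH]; intros C p Hcv Hx HL Hch.
  - simpl in Hch; subst; lra.
  - destruct Hch as [p' [Hp' Hch]].
    destruct (HL i (or_introl eq_refl)) as [Hcvi Hxi].
    assert (Hcv' : is_convex (fun v => C v /\ H i v)) by now apply and_convex.
    pose proof (is_proj_dist_sq _ p p' xs Hcv' Hp' (conj Hx Hxi)).
    assert (hnorm (hsub q xs) <= hnorm (hsub p' xs)).
    { apply (IH _ p' Hcv'); auto; intros j Hj; apply HL; now right. }
    pose proof (hnorm_ge0 (hsub p p')); pose proof (hnorm_ge0 (hsub q xs)).
    apply hnorm_le_iff_sq; [apply hnorm_ge0|]; nra.
Qed.
End Chains.

Lemma hnorm_extrapolate_sq {E : HSpace} (x x' s : E) (l : R) :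
  hnorm (hsub (hadd x (hscal l (hsub x x'))) s) ^ 2
  = (1 + l) * hnorm (hsub x s) ^ 2 - l * hnorm (hsub x' s) ^ 2
    + l * (l + 1) * hnorm (hsub x x') ^ 2.
Proof. rewrite !hnorm_sq; inner_expand; ring. Qed.

Lemma extrapolate_in_ball {E : HSpace} (x0 xs x x' : E) l rho :
  0 <= l <= 1 -> ball x0 rho xs -> ball xs rho x -> ball xs rho x' ->
  ball x0 (4 * rho) (hadd x (hscal l (hsub x x'))).
Proof.
  unfold ball; intros Hl Hxs Hx Hx'.
  rewrite (hnorm_congr _ (hadd (hadd (hscal (1 + l) (hsub x xs)) (hscal (- l) (hsub x' xs)))
                               (hsub xs x0))) by (inner_expand; ring).
  eapply Rle_trans; [apply hnorm_add_le|].
  eapply Rle_trans; [apply Rplus_le_compat_r, hnorm_add_le|].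
  rewrite !hnorm_scal, Rabs_right, Rabs_left1 by lra.
  pose proof (hnorm_ge0 (hsub x xs)); pose proof (hnorm_ge0 (hsub x' xs)); nra.
Qed.

Lemma opnorm_le_pos {X Y : HSpace} (A : X -> Y) c h :
  opnorm_le A c -> A h <> hzero -> 0 < c.
Proof.
  intros Hop Hh; specialize (Hop h).
  assert (0 < hnorm (A h)).
  { destruct (Rle_lt_or_eq_dec _ _ (hnorm_ge0 (A h))) as [|Hz]; auto.
    exfalso; apply Hh, inner_def; rewrite <- hnorm_sq, <- Hz; ring. }
  pose proof (hnorm_ge0 h); destruct (Rle_lt_dec c 0); nra.
Qed.

Section LinearizedStripe.
Variables (X Y : HSpace) (F : X -> Y) (A : X -> Y) (Aadj : Y -> X) (z : X) (yd : Y).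
Variables (eta delta : R).
Hypothesis Hadj : forall h w, inner (A h) w = inner h (Aadj w).

Let r := hsub (F z) yd.

(* [<A* r, z - w> = <A (z - w), r>] and [A (z - w)] approximates [F z - F w = r - (F w - yd)] *)
Lemma stripe_of_tangential_cone w :
  0 <= eta -> hnorm (hsub yd (F w)) <= delta ->
  hnorm (hsub (hsub (F z) (F w)) (A (hsub z w))) <= eta * hnorm (hsub (F z) (F w)) ->
  stripe (Aadj r) (inner (Aadj r) z - hnorm r ^ 2)
         ((delta + eta * (hnorm r + delta)) * hnorm r) w.
Proof.
  intros Heta Hd Htc; unfold stripe.
  set (W := A (hsub z w)) in *.
  replace (inner (Aadj r) w - (inner (Aadj r) z - hnorm r ^ 2)) with (inner (hsub r W) r).
  2:{ rewrite hnorm_sq; unfold W; rewrite inner_sub_l, Hadj, inner_sub_l.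
      inner_expand; ring. }
  eapply Rle_trans; [apply Rabs_inner_le | apply Rmult_le_compat_r; [apply hnorm_ge0|]].
  rewrite (hnorm_congr _ (hadd (hsub (hsub (F z) (F w)) W) (hsub (F w) yd)))
    by (unfold r; inner_expand; ring).
  eapply Rle_trans; [apply hnorm_add_le|]; rewrite (hnorm_sub_sym (F w) yd).
  assert (hnorm (hsub (F z) (F w)) <= hnorm r + delta).
  { rewrite (hnorm_congr _ (hadd r (hsub yd (F w)))) by (unfold r; inner_expand; ring).
    eapply Rle_trans; [apply hnorm_add_le | lra]. }
  nra.
Qed.

Lemma residual_le_of_stripe tau cF w :
  0 <= eta -> 0 <= delta -> 0 < tau -> 0 < cF -> tau * delta < hnorm r ->
  opnorm_le A cF ->
  stripe (Aadj r) (inner (Aadj r) z - hnorm r ^ 2)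
         ((delta + eta * (hnorm r + delta)) * hnorm r) w ->
  ((1 - eta) - / tau * (1 + eta)) * hnorm r <= cF * hnorm (hsub z w).
Proof.
  intros Heta Hd Htau HcF Hr Hop Hw; unfold stripe in Hw.
  set (u := Aadj r) in *; set (nr := hnorm r) in *.
  assert (Hnr : 0 < nr) by nra.
  assert (Hu : hnorm u <= cF * nr).
  { assert (hnorm u * hnorm u <= cF * nr * hnorm u).
    { assert (Huu : hnorm u * hnorm u = inner (A u) r)
        by (rewrite Hadj; unfold hnorm; rewrite sqrt_sqrt; [reflexivity | apply inner_pos]).
      rewrite Huu.
      eapply Rle_trans; [apply inner_le_mul_hnorm|].
      replace (cF * nr * hnorm u) with (cF * hnorm u * nr) by ring.
      apply Rmult_le_compat_r; [lra | apply Hop]. }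
    destruct (Rle_lt_or_eq_dec _ _ (hnorm_ge0 u)) as [Hpos | <-]; [|nra].
    apply Rmult_le_reg_r with (hnorm u); lra. }
  assert (Hupper : inner u (hsub z w) <= cF * nr * hnorm (hsub z w)).
  { eapply Rle_trans; [apply inner_le_mul_hnorm|].
    apply Rmult_le_compat_r; [apply hnorm_ge0 | exact Hu]. }
  rewrite inner_sub_r in Hupper.
  assert (Hlower : inner u z - inner u w >= nr ^ 2 - (delta + eta * (nr + delta)) * nr)
    by (revert Hw; unfold Rabs; destruct Rcase_abs; intros; lra).
  (* [delta < nr / tau] is the discrepancy principle before stopping *)
  assert (Hdnr : delta <= / tau * nr).
  { apply Rmult_le_reg_l with tau; [lra|]; field_simplify; lra. }
  assert (Hgap : nr ^ 2 - (delta + eta * (nr + delta)) * nr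
               - ((1 - eta) - / tau * (1 + eta)) * nr * nr
               = (1 + eta) * nr * (/ tau * nr - delta)) by ring.
  assert (0 <= (1 + eta) * nr * (/ tau * nr - delta)) by (apply Rmult_le_pos; nra).
  apply Rmult_le_reg_r with nr; nra.
Qed.
End LinearizedStripe.

Lemma Psi_pos eta tau :
  eta < 1 -> 0 <= eta -> (1 + eta) / (1 - eta) < tau -> 0 < tau /\ 0 < (1 - eta) - / tau * (1 + eta).
Proof.
  intros He1 He0 Htau.
  assert (0 < (1 + eta) / (1 - eta)) by (apply Rdiv_lt_0_compat; lra).
  assert (Htau' : 1 + eta < tau * (1 - eta)).
  { apply Rmult_lt_compat_r with (r := 1 - eta) in Htau; [|lra].
    replace ((1 + eta) / (1 - eta) * (1 - eta)) with (1 + eta) in Htau by (field; lra); lra. }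
  split; [lra|].
  apply Rmult_lt_reg_l with tau; [lra|].
  replace (tau * ((1 - eta) - / tau * (1 + eta))) with (tau * (1 - eta) - (1 + eta)) by (field; lra).
  lra.
Qed.

Lemma admissible_I_le K k L j : admissible_I K k L -> In j L -> (j <= k)%nat.
Proof.
  intros [[L' ->] [Hsort _]] Hj.
  apply Sorted_StronglySorted in Hsort; [|intros ? ? ? ? ?; lia].
  apply StronglySorted_inv in Hsort as [_ Hgt]; rewrite Forall_forall in Hgt.
  destruct Hj as [<- | Hj]; [lia | specialize (Hgt j Hj); lia].
Qed.

Lemma nonincreasing_le_first (f : nat -> R) n :
  (forall j, (j < n)%nat -> f (S j) <= f j) -> forall j, (j <= n)%nat -> f j <= f 0%nat.
Proof.
  intros Hf j; induction j as [|j IH]; intros Hj; [lra|].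
  specialize (Hf j ltac:(lia)); specialize (IH ltac:(lia)); lra.
Qed.

Section TGSSRun.
Variables (X Y : HSpace) (F : X -> Y) (F' : X -> X -> Y) (Fadj : X -> Y -> X).
Variables (x0 xstar : X) (yd : Y) (rho eta cF delta tau mu : R) (K : nat).
Variables (x : nat -> X) (lam : nat -> R) (I : nat -> list nat).

Local Notation Psi := ((1 - eta) - / tau * (1 + eta)).
Local Notation H := (Hk F Fadj yd eta delta x lam).
Local Notation err k := (hnorm (hsub (x k) xstar) ^ 2).
Local Notation res k := (hnorm (rk F yd x lam k) ^ 2).
Local Notation descent_rate := ((mu - 1) / mu * Psi ^ 2 / cF ^ 2).

Hypothesis Hrho : 0 <= rho.
Hypothesis Hxstar : ball x0 rho xstar.
Hypothesis Heta : 0 <= eta < 1.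
Hypothesis Hadj : forall v, ball x0 (4 * rho) v ->
  forall h w, inner (F' v h) w = inner h (Fadj v w).
Hypothesis Htc : forall v w, ball x0 (4 * rho) v -> ball x0 (4 * rho) w ->
  hnorm (hsub (hsub (F v) (F w)) (F' v (hsub v w))) <= eta * hnorm (hsub (F v) (F w)).
Hypothesis Hop : forall v, ball x0 (4 * rho) v -> opnorm_le (F' v) cF.
Hypothesis HcF : 0 < cF.
Hypothesis Hdelta : 0 <= delta.
Hypothesis Hyd : hnorm (hsub yd (F xstar)) <= delta.
Hypothesis Htau : (1 + eta) / (1 - eta) < tau.
Hypothesis Hmu : 1 < mu.
Hypothesis Hx0 : x 0%nat = x0.
Hypothesis Hlam : forall k, le_kstar F yd delta x lam tau k -> 0 <= lam k <= 1.
Hypothesis HI : forall k, lt_kstar F yd delta x lam tau k -> admissible_I K k (I k).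
Hypothesis Hstep : forall k, lt_kstar F yd delta x lam tau k ->
  (exists q, chain_rel H (fun _ => True) (I k) (zk x lam k) q) ->
  chain_rel H (fun _ => True) (I k) (zk x lam k) (x (S k)).
Hypothesis Hcoupling : forall k, lt_kstar F yd delta x lam tau k ->
  lam k * (lam k + 1) * hnorm (hsub (x k) (x (pred k))) ^ 2 <= Psi ^ 2 * res k / (mu * cF ^ 2).

Lemma zk_in_ball j :
  le_kstar F yd delta x lam tau j -> ball xstar rho (x j) -> ball xstar rho (x (pred j)) ->
  ball x0 (4 * rho) (zk x lam j).
Proof. intros; apply extrapolate_in_ball with xstar; auto. Qed.

Lemma xstar_in_Hk j : ball x0 (4 * rho) (zk x lam j) -> H j xstar.
Proof.
  intros Hz; apply (stripe_of_tangential_cone X Y F (F' (zk x lam j)) (Fadj (zk x lam j)));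
    auto; [lra|].
  apply Htc; [exact Hz | unfold ball in *; lra].
Qed.

Lemma chain_at_exists n : lt_kstar F yd delta x lam tau n ->
  (forall j, (j <= n)%nat -> H j xstar) ->
  exists q, chain_rel H (fun _ => True) (I n) (zk x lam n) q.
Proof.
  intros Hn Hj; apply (chain_rel_exists H xstar); [apply full_convex | apply full_closed | easy|].
  intros i Hi; split; [apply stripe_convex | split; [apply stripe_closed|]].
  apply Hj, (admissible_I_le K n (I n)); auto.
Qed.

Lemma tgss_first_projection n : lt_kstar F yd delta x lam tau n ->
  (forall j, (j <= n)%nat -> ball xstar rho (x j)) ->
  exists p, hnorm (hsub (x (S n)) xstar) <= hnorm (hsub p xstar) /\
    hnorm (hsub (zk x lam n) p) ^ 2 + hnorm (hsub p xstar) ^ 2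
      <= hnorm (hsub (zk x lam n) xstar) ^ 2 /\
    Psi * hnorm (rk F yd x lam n) <= cF * hnorm (hsub (zk x lam n) p).
Proof.
  intros Hn Hball.
  assert (Hz : forall j, (j <= n)%nat -> ball x0 (4 * rho) (zk x lam j)).
  { intros j Hj; apply zk_in_ball; [intros i Hi; apply Hn; lia | apply Hball; lia..]. }
  assert (HH : forall j, (j <= n)%nat -> H j xstar) by (intros j Hj; apply xstar_in_Hk, Hz, Hj).
  pose proof (Hstep n Hn (chain_at_exists n Hn HH)) as Hchain.
  destruct (HI n Hn) as [[L' HIn] _]; rewrite HIn in Hchain.
  destruct Hchain as [p [Hp Hchain]]; exists p.
  assert (Hcv : is_convex (fun v => True /\ H n v))
    by (apply and_convex; [apply full_convex | apply stripe_convex]).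
  split; [|split].
  - apply (chain_rel_dist_le H xstar L' _ p _ Hcv); auto.
    intros i Hi; split; [apply stripe_convex|].
    apply HH, (admissible_I_le K n (I n)); [apply HI, Hn | rewrite HIn; now right].
  - exact (is_proj_dist_sq _ _ p xstar Hcv Hp (conj Logic.I (HH n (le_n n)))).
  - assert (0 < tau) by (apply Psi_pos with eta; lra).
    apply (residual_le_of_stripe X Y F (F' (zk x lam n)) (Fadj (zk x lam n)) _ _ eta delta);
      try lra.
    + apply Hadj, Hz, le_n.
    + apply Hn, le_n.
    + apply Hop, Hz, le_n.
    + apply Hp.
Qed.

Lemma tgss_descent n : lt_kstar F yd delta x lam tau n ->
  (forall j, (j <= n)%nat -> ball xstar rho (x j)) -> err n <= err (pred n) ->
  err (S n) <= err n - descent_rate * res n.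
Proof.
  intros Hn Hball Hmono.
  destruct (tgss_first_projection n Hn Hball) as [p [Hchain [Hproj Hres]]].
  pose proof (hnorm_extrapolate_sq (x n) (x (pred n)) xstar (lam n)) as Hz_err.
  fold (zk x lam n) in Hz_err.
  pose proof (Hcoupling n Hn) as Hcoup.
  destruct (Hlam n) as [Hl0 Hl1]; [intros j Hj; apply Hn; lia|].
  destruct (Psi_pos eta tau) as [Htau0 HPsi]; try lra.
  set (G := Psi ^ 2 * res n / cF ^ 2).
  assert (HG : G <= hnorm (hsub (zk x lam n) p) ^ 2).
  { assert ((Psi * hnorm (rk F yd x lam n)) ^ 2 <= (cF * hnorm (hsub (zk x lam n) p)) ^ 2)
      by (apply pow_incr; split; [apply Rmult_le_pos, hnorm_ge0 | exact Hres]; lra).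
    unfold G; apply Rmult_le_reg_l with (cF ^ 2); [nra|].
    replace (cF ^ 2 * (Psi ^ 2 * res n / cF ^ 2)) with ((Psi * hnorm (rk F yd x lam n)) ^ 2)
      by (field; lra).
    lra. }
  replace (Psi ^ 2 * res n / (mu * cF ^ 2)) with (G / mu) in Hcoup by (unfold G; field; lra).
  replace (descent_rate * res n) with (G - G / mu) by (unfold G; field; lra).
  assert (err (S n) <= hnorm (hsub p xstar) ^ 2)
    by (apply pow_incr; split; [apply hnorm_ge0 | exact Hchain]).
  assert (lam n * (err n - err (pred n)) <= 0) by nra.
  lra.
Qed.

Lemma descent_rate_pos : 0 < descent_rate.
Proof.
  destruct (Psi_pos eta tau) as [_ HPsi]; try lra.
  apply Rdiv_lt_0_compat; [apply Rmult_lt_0_compat; [apply Rdiv_lt_0_compat|]|]; nra.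
Qed.

Lemma ball_of_err_le j : err j <= err 0%nat -> ball xstar rho (x j).
Proof.
  intros Hj; apply (hnorm_le_iff_sq _ _ Hrho); eapply Rle_trans; [exact Hj|].
  rewrite Hx0, hnorm_sub_sym; apply (hnorm_le_iff_sq _ _ Hrho), Hxstar.
Qed.

Lemma tgss_invariant n : le_kstar F yd delta x lam tau n ->
  (forall j, (j < n)%nat -> err (S j) <= err j) /\
  descent_rate * sum_lt (fun k => res k) n <= err 0%nat - err n.
Proof.
  induction n as [|n IH]; intros Hn; [split; [intros; lia | simpl; lra]|].
  destruct IH as [Hmono Hsum]; [intros j Hj; apply Hn; lia|].
  assert (Hdesc : err (S n) <= err n - descent_rate * res n).
  { apply tgss_descent; [intros j Hj; apply Hn; lia | |].
    - intros j Hj; apply ball_of_err_le, (nonincreasing_le_first (fun k => err k) n); auto.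
    - destruct n as [|n]; simpl; [lra | apply Hmono; lia]. }
  assert (0 <= descent_rate * res n)
    by (apply Rmult_le_pos; [apply Rlt_le, descent_rate_pos | apply pow2_ge_0]).
  split; [|cbn [sum_lt]; lra].
  intros j Hj; destruct (Nat.eq_dec j n) as [->|]; [lra | apply Hmono; lia].
Qed.

Lemma tgss_in_ball k : le_kstar F yd delta x lam tau k -> ball xstar rho (x k).
Proof.
  intros Hk; apply ball_of_err_le, (nonincreasing_le_first (fun j => err j) k); [|lia].
  apply (tgss_invariant k Hk).
Qed.

Lemma tgss_well_defined k : lt_kstar F yd delta x lam tau k ->
  ball x0 (4 * rho) (zk x lam k) /\
  exists q, chain_rel H (fun _ => True) (I k) (zk x lam k) q.
Proof.
  intros Hk.
  assert (Hz : forall j, (j <= k)%nat -> ball x0 (4 * rho) (zk x lam j)).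
  { intros j Hj; apply zk_in_ball; [|apply tgss_in_ball..]; intros i Hi; apply Hk; lia. }
  split; [apply Hz, le_n|].
  apply chain_at_exists; [exact Hk | intros j Hj; apply xstar_in_Hk, Hz, Hj].
Qed.

Lemma tgss_err_nonincreasing k : lt_kstar F yd delta x lam tau k ->
  hnorm (hsub (x (S k)) xstar) <= hnorm (hsub (x k) xstar).
Proof.
  intros Hk; apply (hnorm_le_iff_sq _ _ (hnorm_ge0 _)).
  apply (tgss_invariant (S k)); [intros j Hj; apply Hk; lia | lia].
Qed.

Lemma tgss_residual_sum n : le_kstar F yd delta x lam tau n ->
  sum_lt (fun k => res k) n
    <= cF ^ 2 / ((mu - 1) / mu * Psi ^ 2) * hnorm (hsub x0 xstar) ^ 2.
Proof.
  intros Hn; destruct (tgss_invariant n Hn) as [_ Hsum].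
  pose proof descent_rate_pos as Hrate; destruct (Psi_pos eta tau) as [Htau0 HPsi]; try lra.
  rewrite Hx0 in Hsum; pose proof (pow2_ge_0 (hnorm (hsub (x n) xstar))).
  assert (Htau_Psi : (1 - eta) * tau - (1 + eta) = tau * Psi) by (field; lra).
  assert (0 < tau * Psi) by nra.
  replace (cF ^ 2 / ((mu - 1) / mu * Psi ^ 2) * hnorm (hsub x0 xstar) ^ 2)
    with (hnorm (hsub x0 xstar) ^ 2 / descent_rate) by (field; repeat split; lra).
  apply Rmult_le_reg_l with descent_rate; [exact Hrate|].
  replace (descent_rate * (hnorm (hsub x0 xstar) ^ 2 / descent_rate))
    with (hnorm (hsub x0 xstar) ^ 2) by (field; repeat split; lra).
  lra.
Qed.
End TGSSRun.

Theorem proposition4p2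
  (X Y : HSpace) (D : X -> Prop) (F : X -> Y) (F' : X -> X -> Y) (Fadj : X -> Y -> X)
  (x0 : X) (rho eta cF : R) (y : Y) (xstar : X)
  (Hrho : 0 < rho)
  (HD : forall v, ball x0 (4 * rho) v -> D v)
  (Hlin : forall v, D v -> is_linear (F' v))
  (Hbdd : forall v, D v -> exists c, opnorm_le (F' v) c)
  (Hadj : forall v, D v -> forall h w, inner (F' v h) w = inner h (Fadj v w))
  (Hfrechet : forall v, D v -> forall eps, 0 < eps -> exists d, 0 < d /\
      forall h, D (hadd v h) -> hnorm h < d ->
        hnorm (hsub (hsub (F (hadd v h)) (F v)) (F' v h)) <= eps * hnorm h)
  (Hcont : forall v, D v -> forall eps, 0 < eps -> exists d, 0 < d /\
      forall w, D w -> hnorm (hsub w v) < d ->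
        opnorm_le (fun h => hsub (F' w h) (F' v h)) eps)
  (HA1 : ball x0 rho xstar /\ F xstar = y)
  (Heta : 0 < eta < 1)
  (HA2 : forall v w, ball x0 (4 * rho) v -> ball x0 (4 * rho) w ->
      hnorm (hsub (hsub (F v) (F w)) (F' v (hsub v w))) <= eta * hnorm (hsub (F v) (F w)))
  (HA3 : forall v, ball x0 (4 * rho) v ->
      opnorm_le (F' v) cF /\ exists h, F' v h <> hzero)
  (delta : R) (yd : Y) (Hdelta : 0 <= delta) (Hyd : hnorm (hsub yd y) <= delta)
  (K : nat) (HK : (1 <= K)%nat)
  (tau mu : R) (Htau : (1 + eta) / (1 - eta) < tau) (Hmu : 1 < mu)
  (x : nat -> X) (lam : nat -> R) (I : nat -> list nat)
  (Hx0 : x 0%nat = x0)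
  (Hlam0 : lam 0%nat = 0)
  (Hlam : forall k, le_kstar F yd delta x lam tau k -> 0 <= lam k <= 1)
  (HI : forall k, lt_kstar F yd delta x lam tau k -> admissible_I K k (I k))
  (Hstep : forall k, lt_kstar F yd delta x lam tau k ->
      (exists q, chain_rel (Hk F Fadj yd eta delta x lam) (fun _ => True) (I k)
                   (zk x lam k) q) ->
      chain_rel (Hk F Fadj yd eta delta x lam) (fun _ => True) (I k)
                (zk x lam k) (x (S k)))
  (Hcoupling : forall k, lt_kstar F yd delta x lam tau k ->
      lam k * (lam k + 1) * (hnorm (hsub (x k) (x (pred k))))^2
        <= ((1 - eta) - / tau * (1 + eta))^2 * (hnorm (rk F yd x lam k))^2 / (mu * cF^2)) :
  (forall k, lt_kstar F yd delta x lam tau k ->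
      ball x0 (4 * rho) (zk x lam k) /\
      exists q, chain_rel (Hk F Fadj yd eta delta x lam) (fun _ => True) (I k)
                  (zk x lam k) q) /\
  (forall k, lt_kstar F yd delta x lam tau k ->
      hnorm (hsub (x (S k)) xstar) <= hnorm (hsub (x k) xstar)) /\
  (forall v, ball xstar rho v -> ball x0 (2 * rho) v) /\
  (forall k, le_kstar F yd delta x lam tau k ->
      ball xstar rho (x k) /\ ball x0 (2 * rho) (x k)) /\
  (forall n, le_kstar F yd delta x lam tau n ->
      sum_lt (fun k => (hnorm (rk F yd x lam k))^2) n
        <= cF^2 / ((mu - 1) / mu * ((1 - eta) - / tau * (1 + eta))^2)
           * (hnorm (hsub x0 xstar))^2).
Proof.
  destruct HA1 as [Hxstar <-].
  assert (Hadj4 : forall v, ball x0 (4 * rho) v ->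
                  forall h w, inner (F' v h) w = inner h (Fadj v w))
    by (intros v Hv; apply Hadj, HD, Hv).
  assert (Hop : forall v, ball x0 (4 * rho) v -> opnorm_le (F' v) cF)
    by (intros v Hv; apply HA3, Hv).
  assert (HcF : 0 < cF).
  { destruct (HA3 x0 (ball_center x0 (4 * rho) ltac:(lra))) as [Hop0 [h Hh]].
    exact (opnorm_le_pos _ _ _ Hop0 Hh). }
  assert (Hrho0 : 0 <= rho) by lra.
  assert (Heta0 : 0 <= eta < 1) by lra.
  assert (Hball : forall v, ball xstar rho v -> ball x0 (2 * rho) v).
  { intros v; apply ball_subset; unfold ball in Hxstar; lra. }
  split; [|split; [|split; [|split]]].
  - intros k Hk; eapply tgss_well_defined; [..|exact Hk]; eauto.
  - intros k Hk; eapply tgss_err_nonincreasing; [..|exact Hk]; eauto.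
  - exact Hball.
  - intros k Hk.
    assert (ball xstar rho (x k)) by (eapply tgss_in_ball; [..|exact Hk]; eauto).
    auto.
  - intros n Hn; eapply tgss_residual_sum; [..|exact Hn]; eauto.
Qed.
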